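(* Fix a plane tree $T$ with $n\ge 1$ edges and let $F(T)$ be the forest obtained by deleting its root (the ordered list of subtrees rooted at the children of the root). The map sending a labeling $\ell$ such that $(T,\ell)$ is a sticky tree to the function $v\mapsto c(v)-1$ on the nodes of $F(T)$, where $c$ is the certificate-counting function of $(T,\ell)$, is a bijection from the set of such labelings onto the set of closed flows on $F(T)$.
   Context: Sticky trees: a plane tree is a rooted tree in which the children of every node are linearly ordered (left to right). The root has depth $0$, a child of a node of depth $d$ has depth $d+1$. The prefix order is: the root, followed by the prefix order of the subtree of its leftmost child, then of its second child, and so on. $S_u$ denotes the subtree rooted at $u$. A sticky tree is a plane tree $S$ with node set $V$ and a labeling $\ell:V\to\mathbb{N}$ such that: (1) every node $u$ of depth $d$ has $0\le\ell(u)\le d$; (2) every node $u$ of depth $d>0$ has some $v\in S_u$ (possibly $v=u$) with $\ell(v)<d$; (3) for every node $u$ of depth $d$, if some $v\in S_u$ has $\ell(v)=d$, then every node of $S_u$ (including $u$) preceding $v$ in prefix order has label at least $d$. The certificate of a non-root node $u$ of depth $d$ is the first node, in prefix order, of $S_u$ whose label is $<d$. The certificate-counting function $c:V\to\mathbb{N}$ assigns to each node $w$ the number of non-root nodes whose certificate is $w$. Flows: a forest is an ordered list $(A_1,\dots,A_k)$ of plane trees. A flow on a forest $F$ is an integer-valued function $f$ on its nodes with $f(v)\ge -1$ for every node $v$ and such that the outgoing rate of every node is nonnegative, where the outgoing rate of $v$ is $\sum_{w} f(w)$ over all nodes $w$ of the subtree of $F$ rooted at $v$ (including $v$). A flow is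 closed if the outgoing rate of the root of every $A_i$ is $0$. *)

From HB Require Import structures.
From mathcomp Require Import all_boot all_order all_algebra.
Set Implicit Arguments. Unset Strict Implicit. Unset Printing Implicit Defensive.
Import Order.TTheory GRing.Theory Num.Theory.

Inductive ptree := Node of seq ptree.

Definition children (t : ptree) : seq ptree := let: Node ts := t in ts.

Fixpoint ptsize (t : ptree) : nat :=
  let: Node ts := t in (sumn (map ptsize ts)).+1.

(* Nodes are identified with their position in prefix order.  [pre d t]
   lists, in prefix order, (depth, size of subtree) of every node of t,
   the root of t having depth d. *)
Fixpoint pre (d : nat) (t : ptree) : seq (nat * nat) :=
  let: Node ts := t in (d, ptsize t) :: flatten (map (pre d.+1) ts).

Definition tnodes (T : ptree) := pre 0 T.
Definition nnodes (T : ptree) := size (tnodes T).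
Definition depth (T : ptree) (u : nat) := (nth (0, 0) (tnodes T) u).1.
Definition sub (T : ptree) (u : nat) := (nth (0, 0) (tnodes T) u).2.
(* v is a node of S_u (subtrees are contiguous intervals in prefix order) *)
Definition in_sub (T : ptree) (u v : nat) : bool := (u <= v) && (v < u + sub T u).

Definition is_sticky (T : ptree) (l : nat -> nat) : Prop :=
  (forall u, u < nnodes T -> l u <= depth T u) /\
  (forall u, u < nnodes T -> 0 < depth T u ->
     exists v, in_sub T u v /\ l v < depth T u) /\
  (forall u v, u < nnodes T -> in_sub T u v -> l v = depth T u ->
     forall w, in_sub T u w -> w < v -> depth T u <= l w).

Definition certificate (T : ptree) (l : nat -> nat) (u : nat) : nat :=
  u + find (fun k => l (u + k) < depth T u) (iota 0 (sub T u)).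

Definition cert_count (T : ptree) (l : nat -> nat) (w : nat) : nat :=
  count (fun u => certificate T l u == w) (iota 1 (nnodes T).-1).

Definition fnodes (F : seq ptree) := flatten (map (pre 0) F).
Definition fnnodes (F : seq ptree) := size (fnodes F).
Definition fdepth (F : seq ptree) (v : nat) := (nth (0, 0) (fnodes F) v).1.
Definition fsub (F : seq ptree) (v : nat) := (nth (0, 0) (fnodes F) v).2.

Definition outrate (F : seq ptree) (f : nat -> int) (v : nat) : int :=
  (\sum_(v <= w < v + fsub F v) f w)%R.

Definition is_flow (F : seq ptree) (f : nat -> int) : Prop :=
  forall v, v < fnnodes F -> ((-1 <= f v)%R /\ (0 <= outrate F f v)%R).

Definition is_closed_flow (F : seq ptree) (f : nat -> int) : Prop :=
  is_flow F f /\
  (forall v, v < fnnodes F -> fdepth F v = 0 -> outrate F f v = 0%R).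

(* The forest F(T) = children T; its j-th node (prefix order) is the
   (j+1)-th node of T.  The map l |-> (v |-> c(v) - 1) on nodes of F(T). *)
Definition sticky_to_flow (T : ptree) (l : nat -> nat) : nat -> int :=
  fun j => ((cert_count T l j.+1)%:Z - 1)%R.

From Pilot Require Import Defs.
From mathcomp Require Import all_boot all_order all_algebra.
From mathcomp Require Import zify.
Set Implicit Arguments. Unset Strict Implicit. Unset Printing Implicit Defensive.
Import GRing.Theory.

(* Record a forest by the (depth, subtree size) pairs of its nodes in prefix
   order, so that the subtree of node i is an interval starting at i.  Fix a
   forest whose roots have depth D > 0 and a sticky labeling l of it; nodes
   labelled below D may also certify ancestors outside the forest, and m
   counts how often.  By induction on the forest, c + m determines m and l up
   to the values of l below D, and c + m ranges over all h : nat -> nat whose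
   sum over every subtree S_v is at least |S_v|.  In the step from a subforest
   of depth D + 1 to a tree of depth D, the root's certificate q is the first
   node where c + m is positive, and labels at most D are exactly D before q
   and below D from q on.  For T itself, F(T) has depth 1, the root of T is
   labelled 0 and m = 0: then c - 1 is a flow, closed because root subtrees of
   F(T) contain the certificates of their nodes, and conversely a closed flow
   has total mass |F(T)| = sum c, which forces m = 0. *)

(* The notions of Defs for an arbitrary list of (depth, subtree size) pairs,
   so that they can be split along concatenation. *)
Definition nodes := seq (nat * nat).

Section Nodes.
Implicit Types (N A B : nodes) (l : nat -> nat).

Definition ndepth N i := (nth (0, 0) N i).1.
Definition nsub N i := (nth (0, 0) N i).2.
Definition in_nsub N u v := (u <= v) && (v < u + nsub N u).

Definition sticky_at N l u :=
  [/\ l u <= ndepth N u,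
      0 < ndepth N u -> exists2 v, in_nsub N u v & l v < ndepth N u &
      forall v w, in_nsub N u v -> l v = ndepth N u ->
        in_nsub N u w -> w < v -> ndepth N u <= l w].

Definition nsticky N l := forall u, u < size N -> sticky_at N l u.

Definition ncert N l u :=
  u + find (fun k => l (u + k) < ndepth N u) (iota 0 (nsub N u)).

Definition ncount N l w := count (fun u => ncert N l u == w) (iota 0 (size N)).

Definition nested N := forall i, i < size N ->
  i + nsub N i <= size N /\
  forall u, i <= u < i + nsub N i -> u + nsub N u <= i + nsub N i.

Definition depth_ge D N := forall i, i < size N -> D <= ndepth N i.

End Nodes.

Definition shiftf (l : nat -> nat) a i := l (a + i).

Section Catenation.
Variables A B : nodes.
Implicit Type l : nat -> nat.

Lemma forall_lt_cat (P : nat -> Prop) :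
  (forall i, i < size A -> P i) -> (forall i, i < size B -> P (size A + i)) ->
  forall i, i < size (A ++ B) -> P i.
Proof.
move=> PA PB i; rewrite size_cat => hi; case: (ltnP i (size A)) => hA; first exact: PA.
by rewrite -(subnKC hA); apply: PB; lia.
Qed.

Lemma nth_nodes_catr i : nth (0, 0) (A ++ B) (size A + i) = nth (0, 0) B i.
Proof. by rewrite nth_cat ltnNge leq_addr addKn. Qed.

Lemma ndepth_catl i : i < size A -> ndepth (A ++ B) i = ndepth A i.
Proof. by move=> hi; rewrite /ndepth nth_cat hi. Qed.

Lemma nsub_catl i : i < size A -> nsub (A ++ B) i = nsub A i.
Proof. by move=> hi; rewrite /nsub nth_cat hi. Qed.

Lemma ndepth_catr i : ndepth (A ++ B) (size A + i) = ndepth B i.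
Proof. by rewrite /ndepth nth_nodes_catr. Qed.

Lemma nsub_catr i : nsub (A ++ B) (size A + i) = nsub B i.
Proof. by rewrite /nsub nth_nodes_catr. Qed.

Lemma in_nsub_catl u : u < size A -> in_nsub (A ++ B) u = in_nsub A u.
Proof. by move=> hu; rewrite /in_nsub nsub_catl. Qed.

Lemma in_nsub_catr u v :
  in_nsub (A ++ B) (size A + u) v = (size A <= v) && in_nsub B u (v - size A).
Proof.
rewrite /in_nsub nsub_catr; case: (leqP (size A) v) => hv /=; first lia.
by apply/negbTE; lia.
Qed.

Lemma in_nsub_catrr u v : in_nsub (A ++ B) (size A + u) (size A + v) = in_nsub B u v.
Proof. by rewrite in_nsub_catr leq_addr addKn. Qed.

Lemma ncert_catl l u : u < size A -> ncert (A ++ B) l u = ncert A l u.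
Proof. by move=> hu; rewrite /ncert ndepth_catl // nsub_catl. Qed.

Lemma ncert_catr l u :
  ncert (A ++ B) l (size A + u) = size A + ncert B (shiftf l (size A)) u.
Proof.
rewrite /ncert ndepth_catr nsub_catr -addnA; congr (_ + (_ + _)).
by apply: eq_find => k; rewrite /shiftf addnA.
Qed.

Lemma sticky_at_catl l u : u < size A -> sticky_at (A ++ B) l u = sticky_at A l u.
Proof. by move=> hu; rewrite /sticky_at ndepth_catl // in_nsub_catl. Qed.

Lemma in_nsub_catrP u v : in_nsub (A ++ B) (size A + u) v ->
  exists2 v', v = size A + v' & in_nsub B u v'.
Proof. by rewrite in_nsub_catr => /andP[hv ?]; exists (v - size A); rewrite ?subnKC. Qed.

Lemma sticky_at_catr l u :
  sticky_at (A ++ B) l (size A + u) <-> sticky_at B (shiftf l (size A)) u.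
Proof.
rewrite /sticky_at ndepth_catr /shiftf.
split=> -[le_l ex_v min_w]; split=> //.
- by move=> /ex_v [_ /in_nsub_catrP [v -> hv] lt_v]; exists v.
- move=> v w hv eq_v hw lt_wv.
  by apply: (min_w (size A + v)); rewrite ?in_nsub_catrr ?ltn_add2l.
- by move=> /ex_v [v hv lt_v]; exists (size A + v); rewrite ?in_nsub_catrr.
- move=> _ _ /in_nsub_catrP [v -> hv] eq_v /in_nsub_catrP [w -> hw].
  by rewrite ltn_add2l; apply: min_w.
Qed.

Lemma nsticky_cat l : nsticky (A ++ B) l <-> nsticky A l /\ nsticky B (shiftf l (size A)).
Proof.
split=> [H|[HA HB]]; last first.
  by apply: forall_lt_cat => u hu; [rewrite sticky_at_catl | rewrite sticky_at_catr]; auto.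
rewrite /nsticky size_cat in H; split=> u hu.
- by rewrite -(sticky_at_catl l hu); apply: H; lia.
- by rewrite -sticky_at_catr; apply: H; rewrite ltn_add2l.
Qed.

Lemma nested_cat : nested A -> nested B -> nested (A ++ B).
Proof.
move=> nestA nestB; apply: forall_lt_cat => i hi.
- rewrite size_cat nsub_catl //; have [le_A sub_i] := nestA i hi; split; first lia.
  by move=> u hu; rewrite nsub_catl; [apply: sub_i | lia].
- rewrite size_cat nsub_catr; have [le_B sub_i] := nestB i hi; split; first lia.
  move=> u hu; rewrite -(subnKC (_ : size A <= u)) ?nsub_catr; last lia.
  have := sub_i (u - size A); lia.
Qed.

Lemma depth_ge_cat D : depth_ge D A -> depth_ge D B -> depth_ge D (A ++ B).
Proof.
move=> deepA deepB; apply: forall_lt_cat => i hi.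
- by rewrite ndepth_catl //; apply: deepA.
- by rewrite ndepth_catr; apply: deepB.
Qed.

End Catenation.

Fixpoint fpre d (ts : seq ptree) : nodes :=
  if ts is t :: ts' then pre d t ++ fpre d ts' else [::].

Lemma fpreE d ts : fpre d ts = flatten (map (pre d) ts).
Proof. by elim: ts => //= t ts ->. Qed.

Lemma ptree_forest_ind (P : ptree -> Prop) (Q : seq ptree -> Prop) :
  Q [::] -> (forall t ts, P t -> Q ts -> Q (t :: ts)) ->
  (forall ts, Q ts -> P (Node ts)) -> (forall t, P t) /\ (forall ts, Q ts).
Proof.
move=> Q0 QS PN.
have HP : forall t, P t.
  fix IH 1 => -[ts]; apply: PN.
  by elim: ts => [|t ts IHts]; [exact: Q0 | exact: QS (IH t) IHts].
by split=> //; elim=> [|t ts IHts]; [exact: Q0 | exact: QS].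
Qed.

Definition plant D (B : nodes) : nodes := (D, (size B).+1) :: B.

Lemma size_pre_fpre :
  (forall t d, size (pre d t) = ptsize t) /\
  (forall ts d, size (fpre d ts) = sumn (map ptsize ts)).
Proof.
apply: ptree_forest_ind => // [t ts Ht Hts d|ts Hts d] /=.
  by rewrite size_cat Ht Hts.
by rewrite -(Hts d.+1) fpreE.
Qed.

Lemma pre_Node d ts : pre d (Node ts) = plant d (fpre d.+1 ts).
Proof.
by rewrite /plant (size_pre_fpre.2 ts) /= fpreE.
Qed.

Section Plant.
Variables (D : nat) (B : nodes).
Implicit Type l : nat -> nat.

Lemma plant_cat : plant D B = [:: (D, (size B).+1)] ++ B.
Proof. by []. Qed.

Lemma ndepth_plant0 : ndepth (plant D B) 0 = D. Proof. by []. Qed.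
Lemma nsub_plant0 : nsub (plant D B) 0 = (size B).+1. Proof. by []. Qed.
Lemma in_nsub_plant0 v : in_nsub (plant D B) 0 v = (v < (size B).+1).
Proof. by []. Qed.

Lemma ncert_plantS l u : ncert (plant D B) l u.+1 = (ncert B (shiftf l 1) u).+1.
Proof. by rewrite plant_cat (ncert_catr _ _ l u). Qed.

Lemma nsticky_plant l :
  nsticky (plant D B) l <-> sticky_at (plant D B) l 0 /\ nsticky B (shiftf l 1).
Proof.
rewrite plant_cat nsticky_cat -plant_cat.
split=> -[h0 hB]; split=> //; first exact: h0.
by case=> // _; rewrite -(sticky_at_catl _ B) // -plant_cat.
Qed.

Lemma nested_plant : nested B -> nested (plant D B).
Proof.
move=> nestB [|i] /= hi.
- split=> // -[|u]; rewrite /nsub /= => hu; first lia.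
  have [] := nestB u ltac:(lia); rewrite /nsub; lia.
- have [le_B sub_i] := nestB i hi; rewrite /nsub /= in le_B sub_i *; split; first lia.
  by move=> [|u] hu /=; [lia | have := sub_i u; lia].
Qed.

Lemma depth_ge_plant : depth_ge D.+1 B -> depth_ge D (plant D B).
Proof. by move=> deepB [|i] //= hi; have := deepB i hi; rewrite /ndepth /=; lia. Qed.

End Plant.

Lemma nested_depth_ge_fpre :
  (forall t d, nested (pre d t) /\ depth_ge d (pre d t)) /\
  (forall ts d, nested (fpre d ts) /\ depth_ge d (fpre d ts)).
Proof.
apply: ptree_forest_ind => [d|t ts Ht Hts d|ts Hts d]; first by split.
- have [n1 d1] := Ht d; have [n2 d2] := Hts d.
  by split; [exact: nested_cat | exact: depth_ge_cat].
- have [n d'] := Hts d.+1; rewrite pre_Node.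
  by split; [exact: nested_plant | exact: depth_ge_plant].
Qed.

Lemma nested_pre d t : nested (pre d t).
Proof. by have [] := nested_depth_ge_fpre.1 t d. Qed.
Lemma depth_ge_pre d t : depth_ge d (pre d t).
Proof. by have [] := nested_depth_ge_fpre.1 t d. Qed.
Lemma nested_fpre d ts : nested (fpre d ts).
Proof. by have [] := nested_depth_ge_fpre.2 ts d. Qed.
Lemma depth_ge_fpre d ts : depth_ge d (fpre d ts).
Proof. by have [] := nested_depth_ge_fpre.2 ts d. Qed.

Lemma pre_fpre_depthS :
  (forall t d, pre d.+1 t = [seq (p.1.+1, p.2) | p <- pre d t]) /\
  (forall ts d, fpre d.+1 ts = [seq (p.1.+1, p.2) | p <- fpre d ts]).
Proof.
apply: ptree_forest_ind => // [t ts Ht Hts d|ts Hts d]; first by rewrite /= Ht Hts map_cat.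
by rewrite !pre_Node /plant Hts size_map.
Qed.

Lemma find_iota (P : pred nat) n q :
  q < n -> P q -> (forall k, k < q -> ~~ P k) -> find P (iota 0 n) = q.
Proof.
move=> lt_qn Pq notP; have has_P : has P (iota 0 n).
  by apply/hasP; exists q; rewrite ?mem_iota.
have := has_P; rewrite has_find size_iota => lt_find.
case: (ltngtP (find P (iota 0 n)) q) => // lt_q.
- by have := nth_find 0 has_P; rewrite nth_iota // (negbTE (notP _ lt_q)).
- by have := before_find 0 lt_q; rewrite nth_iota ?add0n ?Pq; lia.
Qed.

Section Certificate.
Variables (N : nodes) (l : nat -> nat).

Lemma ncertP u : sticky_at N l u -> 0 < ndepth N u ->
  [/\ in_nsub N u (ncert N l u), l (ncert N l u) < ndepth N u &
      forall w, u <= w < ncert N l u -> ndepth N u <= l w].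
Proof.
move=> [_ ex_v _] /ex_v [v /andP[le_uv lt_v] lt_lv].
set P := fun k => l (u + k) < ndepth N u.
have has_P : has P (iota 0 (nsub N u)).
  by apply/hasP; exists (v - u); rewrite ?mem_iota /P ?subnKC //; lia.
have := has_P; rewrite has_find size_iota => lt_find.
split.
- by rewrite /in_nsub /ncert leq_addr ltn_add2l.
- by have := nth_find 0 has_P; rewrite nth_iota // add0n.
- move=> w /andP[le_uw]; rewrite /ncert -/P -(subnKC le_uw) ltn_add2l => lt_w.
  by have := before_find 0 lt_w; rewrite nth_iota ?add0n /P; lia.
Qed.

Lemma ncert_eq u q : in_nsub N u q -> l q < ndepth N u ->
  (forall w, u <= w < q -> ndepth N u <= l w) -> ncert N l u = q.
Proof.
move=> /andP[le_uq lt_q] lt_lq ge_w; rewrite /ncert (@find_iota _ _ (q - u)).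
- by rewrite subnKC.
- lia.
- by rewrite subnKC.
- by move=> k lt_k; rewrite -leqNgt; apply: ge_w; lia.
Qed.

End Certificate.

Lemma big_nat_offset (R : Type) (idx : R) (op : R -> R -> R) a i s (F : nat -> R) :
  \big[op/idx]_(a + i <= w < a + i + s) F w = \big[op/idx]_(i <= w < i + s) F (a + w).
Proof. by rewrite (addnC a i) big_addn addnAC addnK; apply: eq_bigr => w _; rewrite addnC. Qed.

Lemma sum_eqn_range a b c : \sum_(a <= w < b) (c == w : nat) = (a <= c < b).
Proof.
rewrite -mem_index_iota -count_uniq_mem ?iota_uniq // -sum1_count [RHS]big_mkcond.
by apply: eq_bigr => w _; rewrite /= eq_sym; case: eqP.
Qed.

Lemma ncount_sum N l a b :
  \sum_(a <= w < b) ncount N l w = count (fun u => a <= ncert N l u < b) (iota 0 (size N)).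
Proof.
rewrite /ncount; elim: (iota 0 (size N)) => /= [|u s IHs]; first by rewrite big1.
by rewrite big_split /= IHs sum_eqn_range.
Qed.

Lemma count_iota_range n i s : i + s <= n ->
  count (fun u => i <= u < i + s) (iota 0 n) = s.
Proof.
move=> le_n; rewrite -(subnKC le_n) !iotaD !count_cat add0n.
rewrite (@eq_in_count _ _ pred0 (iota 0 i)) ?count_pred0; last first.
  by move=> u; rewrite mem_iota /=; lia.
rewrite (@eq_in_count _ _ predT (iota i s)) ?count_predT ?size_iota; last first.
  by move=> u; rewrite mem_iota /=; lia.
rewrite (@eq_in_count _ _ pred0 (iota (i + s) _)) ?count_pred0 ?addn0 //.
by move=> u; rewrite mem_iota /=; lia.
Qed.

Section Counting.
Variables (N : nodes) (l : nat -> nat).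
Hypotheses (nestN : nested N) (deepN : depth_ge 1 N) (stickyN : nsticky N l).

Lemma ncert_subtree u : u < size N -> in_nsub N u (ncert N l u).
Proof. by move=> hu; have [] := ncertP (stickyN hu) (deepN hu). Qed.

Lemma ncert_lt_size u : u < size N -> ncert N l u < size N.
Proof.
move=> hu; have /andP[_ lt_c] := ncert_subtree hu; have [le_N _] := nestN hu; lia.
Qed.

Lemma ncount_total : \sum_(0 <= w < size N) ncount N l w = size N.
Proof.
rewrite ncount_sum (@eq_in_count _ _ predT) ?count_predT ?size_iota //.
by move=> u; rewrite mem_iota /= => hu; have := ncert_lt_size hu; lia.
Qed.

Lemma ncount_subtree_ge i : i < size N ->
  nsub N i <= \sum_(i <= w < i + nsub N i) ncount N l w.
Proof.
move=> hi; have [le_N sub_i] := nestN hi; rewrite ncount_sum.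
rewrite -{1}(@count_iota_range (size N) i (nsub N i)) //.
apply: sub_count => u /= hu; have lt_u : u < size N by lia.
have /andP[] := ncert_subtree lt_u; have := sub_i u hu; lia.
Qed.

End Counting.

Section CountCat.
Variables A B : nodes.
Implicit Type l : nat -> nat.

Lemma ncount_cat l w : ncount (A ++ B) l w =
  count (fun u => ncert A l u == w) (iota 0 (size A)) +
  count (fun u => size A + ncert B (shiftf l (size A)) u == w) (iota 0 (size B)).
Proof.
rewrite /ncount size_cat iotaD count_cat add0n -[size A]addn0 iotaDl count_map addn0.
congr (_ + _); last by apply: eq_count => u /=; rewrite ncert_catr.
by apply: eq_in_count => u; rewrite mem_iota /= => hu; rewrite ncert_catl.
Qed.

Lemma ncount_catl l w : w < size A -> ncount (A ++ B) l w = ncount A l w.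
Proof.
move=> hw; rewrite ncount_cat (@eq_in_count _ _ pred0 (iota 0 (size B))) ?count_pred0 ?addn0 //.
by move=> u _ /=; apply/negbTE; lia.
Qed.

Lemma ncount_catr l w : nested A -> depth_ge 1 A -> nsticky A l ->
  ncount (A ++ B) l (size A + w) = ncount B (shiftf l (size A)) w.
Proof.
move=> nestA deepA stickyA; rewrite ncount_cat (@eq_in_count _ _ pred0 (iota 0 (size A))).
  by rewrite count_pred0; apply: eq_count => u /=; rewrite eqn_add2l.
move=> u; rewrite mem_iota /= => hu; apply/negbTE.
by have := ncert_lt_size nestA deepA stickyA (_ : u < size A); lia.
Qed.

End CountCat.

Section CountPlant.
Variables (D : nat) (B : nodes) (l : nat -> nat).

Lemma ncount_plant0 : ncount (plant D B) l 0 = (ncert (plant D B) l 0 == 0).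
Proof.
rewrite plant_cat ncount_cat (@ncert_catl _ B) //= addn0.
by rewrite (@eq_count _ _ pred0) ?count_pred0 ?addn0.
Qed.

Lemma ncount_plantS j :
  ncount (plant D B) l j.+1 = (ncert (plant D B) l 0 == j.+1) + ncount B (shiftf l 1) j.
Proof. by rewrite plant_cat ncount_cat (@ncert_catl _ B) //= addn0. Qed.

End CountPlant.

Definition agree_above D (l1 l2 : nat -> nat) n :=
  forall v, v < n -> l1 v = l2 v \/ l1 v < D /\ l2 v < D.

Section Agreement.
Variables (N : nodes) (D : nat) (l1 l2 : nat -> nat).
Hypotheses (nestN : nested N) (deepN : depth_ge D N) (agree : agree_above D l1 l2 (size N)).

Lemma lt_depth_agree u v : u < size N -> in_nsub N u v ->
  (l1 v < ndepth N u) = (l2 v < ndepth N u).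
Proof.
move=> hu /andP[le_uv lt_v]; have [le_N _] := nestN hu; have := deepN hu.
by have [->|] := @agree v ltac:(lia); lia.
Qed.

Lemma ncert_agree u : u < size N -> ncert N l1 u = ncert N l2 u.
Proof.
move=> hu; rewrite /ncert; congr (_ + _); apply: eq_in_find => k.
by rewrite mem_iota => hk; apply: lt_depth_agree; rewrite // /in_nsub; lia.
Qed.

Lemma ncount_agree w : ncount N l1 w = ncount N l2 w.
Proof.
by apply: eq_in_count => u; rewrite mem_iota /= => hu; rewrite ncert_agree.
Qed.

Lemma nsticky_agree : (forall v, v < size N -> l1 v <= ndepth N v) ->
  nsticky N l2 -> nsticky N l1.
Proof.
move=> le_l1 stick2 u hu; have [_ ex_v min_w] := stick2 u hu.
split; first exact: le_l1.
- by move=> /ex_v [v hv lt_v]; exists v; rewrite ?(lt_depth_agree hu hv).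
- move=> v w hv eq_v hw lt_wv.
  have /andP[le_uv lt_v] := hv; have [le_N _] := nestN hu.
  have eq_v2 : l2 v = ndepth N u.
    by have := deepN hu; have [<-|] := @agree v ltac:(lia); lia.
  by rewrite leqNgt (lt_depth_agree hu hw) -leqNgt; apply: min_w eq_v2 hw lt_wv.
Qed.

End Agreement.

(* [m i] counts ancestors outside the forest whose certificate is [i]; this is
   only possible when [l i] is below the depth [D] of the forest's roots. *)
Definition escapes D (N : nodes) (l m : nat -> nat) :=
  forall i, i < size N -> 0 < m i -> l i < D.

Lemma escapes0 D N l : escapes D N l (fun=> 0).
Proof. by move=> i _; rewrite ltnn. Qed.

Definition counts_injective D (N : nodes) := forall l1 l2 m1 m2,
  nsticky N l1 -> nsticky N l2 -> escapes D N l1 m1 -> escapes D N l2 m2 ->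
  (forall i, i < size N -> ncount N l1 i + m1 i = ncount N l2 i + m2 i) ->
  (forall i, i < size N -> m1 i = m2 i) /\ agree_above D l1 l2 (size N).

Definition counts_surjective D (N : nodes) := forall h : nat -> nat,
  (forall i, i < size N -> nsub N i <= \sum_(i <= w < i + nsub N i) h w) ->
  exists l m, [/\ nsticky N l, escapes D N l m &
    forall i, i < size N -> h i = ncount N l i + m i].

Lemma escapes_cat D A B l m : escapes D (A ++ B) l m ->
  escapes D A l m /\ escapes D B (shiftf l (size A)) (shiftf m (size A)).
Proof.
move=> esc; split=> i hi; apply: esc; rewrite size_cat; lia.
Qed.

Definition catf (f g : nat -> nat) a i := if i < a then f i else g (i - a).

Lemma catf_l f g a i : i < a -> catf f g a i = f i.
Proof. by rewrite /catf => ->. Qed.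

Lemma catf_r f g a i : catf f g a (a + i) = g i.
Proof. by rewrite /catf ltnNge leq_addr addKn. Qed.

Section CatStep.
Variables (D : nat) (A B : nodes).
Hypotheses (D_gt0 : 0 < D) (nestA : nested A) (deepA : depth_ge D A).

Let deepA1 : depth_ge 1 A.
Proof. by move=> i hi; have := deepA hi; lia. Qed.

Lemma counts_injective_cat :
  counts_injective D A -> counts_injective D B -> counts_injective D (A ++ B).
Proof.
move=> injA injB l1 l2 m1 m2 /nsticky_cat[sA1 sB1] /nsticky_cat[sA2 sB2].
move=> /escapes_cat[eA1 eB1] /escapes_cat[eA2 eB2] eq_h.
have eq_hA i : i < size A -> ncount A l1 i + m1 i = ncount A l2 i + m2 i.
  move=> hi; rewrite -(@ncount_catl _ B l1) // -(@ncount_catl _ B l2) //.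
  by apply: eq_h; rewrite size_cat ltn_addr.
have eq_hB i : i < size B -> ncount B (shiftf l1 (size A)) i + shiftf m1 (size A) i =
                            ncount B (shiftf l2 (size A)) i + shiftf m2 (size A) i.
  by move=> hi; rewrite -!ncount_catr //; apply: eq_h; rewrite size_cat ltn_add2l.
have [eq_mA agA] := injA _ _ _ _ sA1 sA2 eA1 eA2 eq_hA.
have [eq_mB agB] := injB _ _ _ _ sB1 sB2 eB1 eB2 eq_hB.
by split; apply: forall_lt_cat; auto.
Qed.

Lemma counts_surjective_cat : nested B ->
  counts_surjective D A -> counts_surjective D B -> counts_surjective D (A ++ B).
Proof.
move=> nestB surjA surjB h h_sub.
have h_subA i : i < size A -> nsub A i <= \sum_(i <= w < i + nsub A i) h w.
  by move=> hi; rewrite -(@nsub_catl _ B) //; apply: h_sub; rewrite size_cat ltn_addr.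
have h_subB i : i < size B ->
    nsub B i <= \sum_(i <= w < i + nsub B i) shiftf h (size A) w.
  move=> hi; rewrite -big_nat_offset -(nsub_catr A).
  by apply: h_sub; rewrite size_cat ltn_add2l.
have [lA [mA [sA eA hA]]] := surjA h h_subA.
have [lB [mB [sB eB hB]]] := surjB _ h_subB.
pose l := catf lA lB (size A); pose m := catf mA mB (size A).
have agA : agree_above 0 l lA (size A) by move=> v hv; left; rewrite /l catf_l.
have agB : agree_above 0 (shiftf l (size A)) lB (size B).
  by move=> v hv; left; rewrite /l /shiftf catf_r.
have le0 N : depth_ge 0 N by [].
have sA' : nsticky A l.
  apply: (nsticky_agree nestA (le0 A) agA _ sA) => v hv.
  by rewrite /l catf_l //; have [] := sA v hv.
have sB' : nsticky B (shiftf l (size A)).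
  apply: (nsticky_agree nestB (le0 B) agB _ sB) => v hv.
  by rewrite /l /shiftf catf_r; have [] := sB v hv.
exists l, m; split; first by apply/nsticky_cat.
- apply: forall_lt_cat => i hi; rewrite /m /l.
  + by rewrite !catf_l //; apply: eA.
  + by rewrite !catf_r; apply: eB.
- apply: forall_lt_cat => i hi.
  + by rewrite ncount_catl // /m catf_l // hA // (ncount_agree nestA (le0 A) agA).
  + by rewrite ncount_catr // /m catf_r (ncount_agree nestB (le0 B) agB) -hB.
Qed.

End CatStep.

Section RootCertificate.
Variables (D : nat) (B : nodes) (l : nat -> nat).
Hypotheses (D_gt0 : 0 < D) (stick0 : sticky_at (plant D B) l 0).
Local Notation q := (ncert (plant D B) l 0).

Lemma root_certP :
  [/\ q < (size B).+1, l q < D & forall w, w < q -> D <= l w].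
Proof. by have [] := ncertP stick0 D_gt0. Qed.

Lemma root_label_lt i : i < (size B).+1 -> l i <= D -> (l i < D) = (q <= i).
Proof.
move=> hi le_D; have [lt_q lq_lt ge_w] := root_certP.
case: (ltnP i q) => [/ge_w|le_qi]; first by rewrite ltnNge => ->.
rewrite ltnNge; apply/negP => ge_D.
have eq_D : l i = D by apply/eqP; rewrite eqn_leq le_D ge_D.
have [_ _ min_w] := stick0; rewrite ndepth_plant0 in min_w.
move: le_qi; rewrite leq_eqVlt => /orP[/eqP eq_qi|lt_qi].
- by move: lq_lt; rewrite eq_qi eq_D ltnn.
- by have := min_w i q hi eq_D lt_q lt_qi; rewrite leqNgt lq_lt.
Qed.

Lemma escapes_root_cert m i : escapes D (plant D B) l m -> i < (size B).+1 ->
  0 < m i + (q == i) -> q <= i.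
Proof.
move=> esc hi; case: eqP => [->//|_]; rewrite addn0 => /(esc i hi) lt_D.
by rewrite -root_label_lt // ltnW.
Qed.

Lemma escapes_plant_forest m : escapes D (plant D B) l m ->
  escapes D.+1 B (shiftf l 1) (fun j => m j.+1 + (q == j.+1)).
Proof.
move=> esc j hj; rewrite /shiftf add1n; case: eqP => [<- _|_].
  by have [_ lt_D _] := root_certP; apply: ltnW.
by rewrite addn0 => /(esc j.+1 hj) /ltnW.
Qed.

End RootCertificate.

Lemma counts_injective_plant D B : 0 < D -> nested B -> depth_ge D.+1 B ->
  counts_injective D.+1 B -> counts_injective D (plant D B).
Proof.
move=> D_gt0 nestB deepB injB l1 l2 m1 m2.
move=> /nsticky_plant[r1 s1] /nsticky_plant[r2 s2] e1 e2 eq_h.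
set q1 := ncert (plant D B) l1 0; set q2 := ncert (plant D B) l2 0.
have eq_hB j : j < size B ->
    ncount B (shiftf l1 1) j + (m1 j.+1 + (q1 == j.+1)) =
    ncount B (shiftf l2 1) j + (m2 j.+1 + (q2 == j.+1)).
  by move=> hj; have := eq_h j.+1 hj; rewrite !ncount_plantS; lia.
have [eq_m' ag'] := injB _ _ _ _ s1 s2 (escapes_plant_forest D_gt0 r1 e1)
  (escapes_plant_forest D_gt0 r2 e2) eq_hB.
have eq_M i : i < (size B).+1 -> m1 i + (q1 == i) = m2 i + (q2 == i).
  case: i => [_|j /eq_m' //]; have := eq_h 0 isT.
  by rewrite !ncount_plant0 -/q1 -/q2; lia.
have eq_q : q1 = q2.
  have [lt_q1 _ _] := root_certP D_gt0 r1; have [lt_q2 _ _] := root_certP D_gt0 r2.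
  apply/eqP; rewrite eqn_leq (escapes_root_cert D_gt0 r1 e1 lt_q2); last first.
    by rewrite eq_M // eqxx addn1.
  by rewrite (escapes_root_cert D_gt0 r2 e2 lt_q1) // -eq_M // eqxx addn1.
split=> [i /eq_M|i hi]; first by rewrite eq_q; lia.
have le_D : l1 i <= D /\ l2 i <= D \/ l1 i = l2 i.
  case: i hi => [_|j hj]; first by have [le1 _ _] := r1; have [le2 _ _] := r2; left.
  by have [|[]] := ag' j hj; rewrite /shiftf add1n; [right | left].
case: le_D => [[le1 le2]|]; last by left.
have := root_label_lt D_gt0 r1 hi le1; have := root_label_lt D_gt0 r2 hi le2.
rewrite -/q1 -/q2 eq_q; case: (q2 <= i) => /= lt2 lt1; [right | left]; lia.
Qed.

Lemma first_positive n (M : nat -> nat) : 0 < \sum_(0 <= i < n) M i ->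
  exists q, [/\ q < n, 0 < M q & forall i, i < q -> M i = 0].
Proof.
move=> sum_gt0; have ex_pos : exists i, (i < n) && (0 < M i).
  elim: n sum_gt0 => [|n IHn]; first by rewrite big_geq.
  rewrite big_nat_recr //= addn_gt0 => /orP[/IHn [i /andP[hi Mi]]|Mn].
  - by exists i; rewrite ltnS ltnW.
  - by exists n; rewrite ltnSn.
case: (ex_minnP ex_pos) => q /andP[lt_q Mq] min_q; exists q; split=> // i lt_i.
apply/eqP; rewrite -leqn0 leqNgt; apply/negP => Mi.
by have := min_q i; rewrite Mi (ltn_trans lt_i lt_q) => /(_ isT); rewrite leqNgt lt_i.
Qed.

(* A relabeling of [plant D B] whose root certificate is [q]; it changes only
   labels at most [D], which the counts of [B] cannot see. *)
Definition plant_label D q (l : nat -> nat) i :=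
  let low := if q <= i then D.-1 else D in
  if i is j.+1 then (if l j <= D then low else l j) else low.

Section PlantLabel.
Variables (D : nat) (l : nat -> nat) (q : nat).
Local Notation L := (plant_label D q l).

Lemma plant_label_before i : i < q -> D <= L i.
Proof.
by case: i => [|j] lt_i /=; rewrite [q <= _]leqNgt lt_i //=; case: (leqP (l j) D); lia.
Qed.

Lemma plant_label_agree n : agree_above D.+1 (shiftf L 1) l n.
Proof.
move=> j _; rewrite /shiftf add1n /=.
by case: (leqP (l j) D) => [le_D|_]; [right; case: ifP | left]; lia.
Qed.

Variable B : nodes.
Hypotheses (nestB : nested B) (deepB : depth_ge D.+1 B) (stickyB : nsticky B l).

Lemma nsticky_plant_label_forest : nsticky B (shiftf L 1).
Proof.
apply: (nsticky_agree nestB deepB (@plant_label_agree (size B)) _ stickyB) => j hj.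
have := deepB hj; have [le_l _ _] := stickyB hj.
rewrite /shiftf add1n /= => lt_D; case: (leqP (l j) D) => // _; case: (q <= j.+1); lia.
Qed.

Hypothesis D_gt0 : 0 < D.

Lemma plant_label_below i : q <= i -> (if i is j.+1 then l j <= D else true) -> L i < D.
Proof. by case: i => [|j] le_q; rewrite /= le_q; [lia | move=> ->; lia]. Qed.

Lemma plant_label_neq i : q <= i -> L i != D.
Proof. by case: i => [|j] le_q; rewrite /= le_q; [lia | case: (leqP (l j) D); lia]. Qed.

Hypothesis low_q : forall j, q = j.+1 -> l j <= D.

Lemma plant_label_at_q : L q < D.
Proof. by apply: plant_label_below => //; case E : q => [//|j]; apply: low_q. Qed.

Hypothesis lt_q : q < (size B).+1.

Lemma plant_label_cert : ncert (plant D B) L 0 = q.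
Proof.
apply: ncert_eq; rewrite ?ndepth_plant0 ?plant_label_at_q //.
by move=> w /andP[_ /plant_label_before].
Qed.

Lemma nsticky_plant_label : nsticky (plant D B) L.
Proof.
apply/nsticky_plant; split; last exact: nsticky_plant_label_forest.
rewrite /sticky_at ndepth_plant0; split=> [|_|v w _ eq_v _ lt_wv].
- by rewrite /=; case: (q <= 0); lia.
- by exists q; rewrite ?in_nsub_plant0 ?plant_label_at_q.
- apply/plant_label_before/(ltn_trans lt_wv); rewrite ltnNge.
  by apply/negP => /plant_label_neq; rewrite eq_v eqxx.
Qed.

End PlantLabel.

Lemma counts_surjective_plant D B : 0 < D -> nested B -> depth_ge D.+1 B ->
  counts_surjective D.+1 B -> counts_surjective D (plant D B).
Proof.
move=> D_gt0 nestB deepB surjB h h_sub.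
have h_subB j : j < size B -> nsub B j <= \sum_(j <= w < j + nsub B j) shiftf h 1 w.
  by move=> hj; rewrite -big_nat_offset; apply: (h_sub j.+1 hj).
have [l [m [sB eB hB]]] := surjB _ h_subB.
pose M i := if i is j.+1 then m j else h 0.
have [q [lt_q Mq M0]] : exists q, [/\ q < (size B).+1, 0 < M q & forall i, i < q -> M i = 0].
  apply: first_positive; rewrite big_nat_recl //=.
  have := h_sub 0 isT; rewrite nsub_plant0 add0n big_nat_recl //.
  have -> : \sum_(0 <= i < size B) h i.+1 = size B + \sum_(0 <= i < size B) m i.
    have deepB1 : depth_ge 1 B by move=> i hi; have := deepB i hi; lia.
    rewrite -[X in X + _](ncount_total nestB deepB1 sB) -big_split.
    by apply: eq_big_nat => i hi; apply: hB.
  lia.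
have low_q j : q = j.+1 -> l j <= D.
  by move=> eq_q; move: Mq lt_q; rewrite eq_q ltnS => Mj hj; apply: eB hj Mj.
pose L := plant_label D q l.
have agL := @plant_label_agree D l q (size B).
exists L, (fun i => M i - (i == q)); split.
- exact: nsticky_plant_label.
- move=> i hi /= pos_i; have le_qi : q <= i.
    by rewrite leqNgt; apply/negP => /M0 M_i; rewrite M_i in pos_i.
  apply: (plant_label_below D_gt0 le_qi); case: i hi pos_i {le_qi} => // j hj pos_j.
  by apply: eB hj _; move: pos_j; rewrite /M; lia.
- have eq_M i : M i = (q == i) + (M i - (i == q)).
    by case: (eqVneq i q) => [->|ne]; rewrite ?eqxx 1?eq_sym ?(negbTE ne); lia.
  case=> [_|j hj] /=; first by rewrite ncount_plant0 plant_label_cert // -[h 0]/(M 0).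
  rewrite ncount_plantS plant_label_cert // (ncount_agree nestB deepB agL).
  have := hB j hj; rewrite /shiftf add1n => ->.
  by rewrite -addnA addnCA -[m j]/(M j.+1) -eq_M.
Qed.

Lemma counts_bijective_pre_fpre :
  (forall t D, 0 < D -> counts_injective D (pre D t) /\ counts_surjective D (pre D t)) /\
  (forall ts D, 0 < D -> counts_injective D (fpre D ts) /\ counts_surjective D (fpre D ts)).
Proof.
apply: ptree_forest_ind => [D _|t ts Ht Hts D D_gt0|ts Hts D D_gt0].
- split=> [l1 l2 m1 m2 _ _ _ _ _|h _]; first by split=> i //=.
  by exists (fun=> 0), (fun=> 0); split=> i //=.
- have [injt surjt] := Ht D D_gt0; have [injts surjts] := Hts D D_gt0.
  have := @nested_pre D t; have := @depth_ge_pre D t; have := @nested_fpre D ts.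
  by split; [exact: counts_injective_cat | exact: counts_surjective_cat].
- have [injts surjts] := Hts D.+1 isT; rewrite pre_Node.
  have := @nested_fpre D.+1 ts; have := @depth_ge_fpre D.+1 ts.
  by split; [exact: counts_injective_plant | exact: counts_surjective_plant].
Qed.

Lemma pre_root d t : ndepth (pre d t) 0 = d /\ nsub (pre d t) 0 = size (pre d t).
Proof. by case: t => ts; rewrite pre_Node. Qed.

Lemma pre_depth_gt d t i : 0 < i -> i < size (pre d t) -> d < ndepth (pre d t) i.
Proof.
case: t => ts; rewrite pre_Node; case: i => // i _ hi.
exact: (@depth_ge_fpre d.+1 ts i hi).
Qed.

Lemma pre_root_only d t i : i < size (pre d t) -> ndepth (pre d t) i = d -> i = 0.
Proof. by case: i => // i hi; have := @pre_depth_gt d t i.+1 isT hi; lia. Qed.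

Lemma sum_fpre_roots (R : nmodType) D ts (F : nat -> R) :
  (forall i, i < size (fpre D ts) -> ndepth (fpre D ts) i = D ->
     (\sum_(i <= w < i + nsub (fpre D ts) i) F w)%R = 0%R) ->
  (\sum_(0 <= w < size (fpre D ts)) F w)%R = 0%R.
Proof.
elim: ts F => [|t ts IHts] F roots0 /=; first by rewrite big_geq.
have [root_d root_sub] := pre_root D t.
have pos_t : 0 < size (pre D t) by case: t {root_d root_sub roots0} => ts'; rewrite pre_Node.
rewrite size_cat (@big_cat_nat _ _ _ (size (pre D t))) ?leq_addr //=.
have := roots0 0; rewrite size_cat ndepth_catl // nsub_catl // root_d root_sub.
move=> -> //; last by rewrite ltn_addr.
rewrite add0r -[size (pre D t)]addn0 big_nat_offset add0n.
apply: IHts => i hi eq_D; have := roots0 (size (pre D t) + i).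
by rewrite size_cat ndepth_catr nsub_catr big_nat_offset ltn_add2l; apply.
Qed.

Lemma ncount_root_subtree D ts l : 0 < D -> nsticky (fpre D ts) l ->
  forall i, i < size (fpre D ts) -> ndepth (fpre D ts) i = D ->
  \sum_(i <= w < i + nsub (fpre D ts) i) ncount (fpre D ts) l w = nsub (fpre D ts) i.
Proof.
move=> D_gt0; elim: ts l => [|t ts IHts] l //= /nsticky_cat [stickyA stickyB].
set A := pre D t; set B := fpre D ts.
have nestA : nested A := @nested_pre D t.
have deepA : depth_ge 1 A by move=> i hi; have := @depth_ge_pre D t i hi; rewrite -/A; lia.
apply: forall_lt_cat => i hi.
- rewrite ndepth_catl // => /(pre_root_only hi) i0; rewrite i0 in hi *.
  rewrite nsub_catl //.
  have [_ ->] := pre_root D t; rewrite add0n -[RHS](ncount_total nestA deepA stickyA).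
  by apply: eq_big_nat => w hw; rewrite ncount_catl.
- rewrite (ndepth_catr A B) (nsub_catr A B) big_nat_offset => eq_D.
  rewrite -[RHS](IHts _ stickyB i hi eq_D).
  by apply: eq_big_nat => w _; rewrite ncount_catr.
Qed.

Lemma is_stickyE T l : is_sticky T l <-> nsticky (tnodes T) l.
Proof.
split=> [[le_l [ex_v min_w]] u hu|stick].
- split=> [|/(ex_v u hu) [v []]|v w hv eq_v hw]; first exact: le_l.
    by exists v.
  exact: min_w.
- split; [|split] => u.
  + by move=> /stick [].
  + by move=> /stick [_ ex_v _] /ex_v [v]; exists v.
  + by move=> v /stick [_ _ min_w] hv eq_v w hw; apply: min_w.
Qed.

Lemma tnodes_Node ts : tnodes (Node ts) = plant 0 (fpre 1 ts).
Proof. exact: pre_Node. Qed.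

Lemma is_sticky_Node ts l :
  is_sticky (Node ts) l <-> l 0 = 0 /\ nsticky (fpre 1 ts) (shiftf l 1).
Proof.
rewrite is_stickyE tnodes_Node nsticky_plant /sticky_at ndepth_plant0.
split=> -[root stickyB]; split=> //; first by case: root; rewrite leqn0 => /eqP.
by split=> [|//|*]; rewrite ?root.
Qed.

Lemma cert_count_Node ts l j :
  cert_count (Node ts) l j.+1 = ncount (fpre 1 ts) (shiftf l 1) j.
Proof.
rewrite /cert_count /ncount /nnodes tnodes_Node -[iota 1 _]/(iota (1 + 0) _) iotaDl.
rewrite count_map; apply: eq_count => u /=.
by rewrite add1n -[certificate _ _ _]/(ncert _ _ _) tnodes_Node ncert_plantS eqSS.
Qed.

Lemma sumz_sub1 a b (h : nat -> nat) :
  (\sum_(a <= w < b) ((h w)%:Z - 1) = (\sum_(a <= w < b) h w)%:Z - (b - a)%:Z)%R.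
Proof.
rewrite sumrB sumr_const_nat; congr (_ - _)%R; last exact: natz.
by rewrite -natz natr_sum; apply: eq_bigr => w _; rewrite natz.
Qed.

Section Forest.
Variable ts : seq ptree.
Local Notation N1 := (fpre 1 ts).

Lemma fpre1_fnodes : N1 = [seq (p.1.+1, p.2) | p <- fnodes ts].
Proof. by rewrite /fnodes -fpreE; apply: pre_fpre_depthS.2. Qed.

Lemma fnnodes_fpre1 : fnnodes ts = size N1.
Proof. by rewrite fpre1_fnodes size_map. Qed.

Lemma fsub_fpre1 v : fsub ts v = nsub N1 v.
Proof.
rewrite /fsub /nsub fpre1_fnodes; case: (ltnP v (fnnodes ts)) => hv.
  by rewrite (nth_map (0, 0)).
by rewrite !nth_default ?size_map.
Qed.

Lemma fdepth_fpre1 v : v < size N1 -> ndepth N1 v = (fdepth ts v).+1.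
Proof.
by rewrite /ndepth /fdepth fpre1_fnodes size_map => hv; rewrite (nth_map (0, 0)).
Qed.

Lemma outrate_counts (h : nat -> nat) v :
  outrate ts (fun j => (h j)%:Z - 1)%R v =
  ((\sum_(v <= w < v + nsub N1 v) h w)%:Z - (nsub N1 v)%:Z)%R.
Proof. by rewrite /outrate fsub_fpre1 sumz_sub1 addKn. Qed.

Let nestN1 : nested N1 := @nested_fpre 1 ts.
Let deepN1 : depth_ge 1 N1 := @depth_ge_fpre 1 ts.

Lemma sticky_to_flowE l j :
  sticky_to_flow (Node ts) l j = ((ncount N1 (shiftf l 1) j)%:Z - 1)%R.
Proof. by rewrite /sticky_to_flow cert_count_Node. Qed.

Lemma sticky_to_flow_closed l :
  is_sticky (Node ts) l -> is_closed_flow ts (sticky_to_flow (Node ts) l).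
Proof.
move=> /is_sticky_Node [_ stickyB].
have outE v : outrate ts (sticky_to_flow (Node ts) l) v =
    ((\sum_(v <= w < v + nsub N1 v) ncount N1 (shiftf l 1) w)%:Z - (nsub N1 v)%:Z)%R.
  by rewrite -outrate_counts /outrate; apply: eq_bigr => w _; rewrite sticky_to_flowE.
split=> v; rewrite fnnodes_fpre1 => hv.
- rewrite sticky_to_flowE outE; have := ncount_subtree_ge nestN1 deepN1 stickyB hv.
  lia.
- move=> depth0; rewrite outE ncount_root_subtree ?subrr //.
  by rewrite fdepth_fpre1 // depth0.
Qed.

Lemma sticky_to_flow_inj l1 l2 :
  is_sticky (Node ts) l1 -> is_sticky (Node ts) l2 ->
  (forall j, j < fnnodes ts -> sticky_to_flow (Node ts) l1 j = sticky_to_flow (Node ts) l2 j) ->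
  forall u, u < nnodes (Node ts) -> l1 u = l2 u.
Proof.
move=> /is_sticky_Node [root1 stick1] /is_sticky_Node [root2 stick2] eq_f.
have [injN1 _] := counts_bijective_pre_fpre.2 ts 1 isT.
have eq_counts j : j < size N1 ->
    ncount N1 (shiftf l1 1) j + 0 = ncount N1 (shiftf l2 1) j + 0.
  by move=> hj; have := eq_f j; rewrite fnnodes_fpre1 !sticky_to_flowE => /(_ hj); lia.
have [_ agree] := injN1 _ _ _ _ stick1 stick2 (@escapes0 _ _ _) (@escapes0 _ _ _) eq_counts.
rewrite /nnodes tnodes_Node => -[_|j /agree]; first by rewrite root1 root2.
by rewrite /shiftf !add1n; lia.
Qed.

Lemma sticky_to_flow_surj f : is_closed_flow ts f ->
  exists l, is_sticky (Node ts) l /\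
    forall j, j < fnnodes ts -> sticky_to_flow (Node ts) l j = f j.
Proof.
rewrite /is_closed_flow /is_flow fnnodes_fpre1 => -[flow closed].
pose h j := `|(f j + 1)%R|%N.
have fE j : j < size N1 -> f j = ((h j)%:Z - 1)%R.
  by move=> hj; have [ge_f _] := flow j hj; rewrite /h; lia.
have outE v : v < size N1 ->
    outrate ts f v = ((\sum_(v <= w < v + nsub N1 v) h w)%:Z - (nsub N1 v)%:Z)%R.
  move=> hv; rewrite -outrate_counts /outrate fsub_fpre1.
  by apply: eq_big_nat => w hw; apply: fE; have [le_N _] := nestN1 hv; lia.
have sum_h : \sum_(0 <= w < size N1) h w = size N1.
  have sum_f : (\sum_(0 <= w < size N1) f w)%R = 0%R.
    apply: sum_fpre_roots => v hv root_v; rewrite -fsub_fpre1; apply: closed => //.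
    by move: root_v; rewrite fdepth_fpre1 // => -[].
  suff : ((\sum_(0 <= w < size N1) h w)%:Z - (size N1 - 0)%:Z = 0)%R by lia.
  by rewrite -sumz_sub1 -[RHS]sum_f; apply: eq_big_nat => w hw; rewrite fE.
have [_ surjN1] := counts_bijective_pre_fpre.2 ts 1 isT.
have [l [m [stick _ hl]]] : exists l m, [/\ nsticky N1 l, escapes 1 N1 l m &
    forall i, i < size N1 -> h i = ncount N1 l i + m i].
  by apply: surjN1 => v hv; have [_] := flow v hv; rewrite outE //; lia.
have m0 j : j < size N1 -> m j = 0.
  have : \sum_(0 <= w < size N1) m w == 0.
    move: (ncount_total nestN1 deepN1 stick); rewrite -[in X in _ = X]sum_h.
    rewrite (eq_big_nat _ _ (fun w hw => hl w _)) ?big_split /=; lia.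
  by rewrite sum_nat_seq_eq0 => /allP m0 hj; apply/eqP/m0; rewrite mem_index_iota.
exists (fun u => if u is j.+1 then l j else 0); split; first exact/is_sticky_Node.
by move=> j hj; rewrite sticky_to_flowE fE // hl // m0 // addn0.
Qed.

End Forest.

Theorem mainTheorem6 (T : ptree) (hT : 2 <= ptsize T) :
  (forall l, is_sticky T l -> is_closed_flow (children T) (sticky_to_flow T l)) /\
  (forall l1 l2, is_sticky T l1 -> is_sticky T l2 ->
     (forall j, j < fnnodes (children T) -> sticky_to_flow T l1 j = sticky_to_flow T l2 j) ->
     forall u, u < nnodes T -> l1 u = l2 u) /\
  (forall f, is_closed_flow (children T) f ->
     exists l, is_sticky T l /\
       forall j, j < fnnodes (children T) -> sticky_to_flow T l j = f j).
Proof.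
case: T hT => ts _ /=; split; first exact: sticky_to_flow_closed.
by split; [exact: sticky_to_flow_inj | exact: sticky_to_flow_surj].
Qed.
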